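(* Let $V$ be a finite set and let $A$ be a real symmetric matrix indexed by $V$. Consider the statements: (i) $A$ has a perfect elimination ordering; (ii) $A$ has no weighted chordless cycle; (iii) every level graph of $A$ is chordal. Then (i) implies (ii), and (ii) implies (iii).
   Context: A perfect elimination ordering of $A$ is a linear order $\pi$ of $V$ with $A_{yz}\ge\min\{A_{xy},A_{xz}\}$ for all $x<_\pi y<_\pi z$. A walk $W=(v_0,\dots,v_p)$ of elements of $V$ is weighted chordless in $A$ if $A_{v_{i-1}v_{i+1}}<\min\{A_{v_{i-1}v_i},A_{v_{i+1}v_i}\}$ for $1\le i\le p-1$; it is a weighted chordless cycle if in addition $v_0=v_p$, the elements $v_0,\dots,v_{p-1}$ are distinct, and $A_{v_{p-1}v_1}<\min\{A_{v_{p-1}v_0},A_{v_0v_1}\}$. If $\alpha_0<\dots<\alpha_L$ are the distinct values of the entries of $A$, the level graph $G_\ell$ is the graph on $V$ with edges the pairs $\{x,y\}$ with $A_{xy}\ge\alpha_\ell$. A graph is chordal if it contains no chordless (induced) cycle of length at least 4. *)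

From mathcomp Require Import all_boot all_order all_algebra.
Set Implicit Arguments. Unset Strict Implicit. Unset Printing Implicit Defensive.
Import Order.TTheory GRing.Theory Num.Theory.
Local Open Scope ring_scope.

Section Defs.
Variables (R : realFieldType) (V : finType).

Definition symmetric_mx (A : V -> V -> R) : Prop := forall x y, A x y = A y x.

(* A linear order pi of V is encoded as a duplicate-free enumeration s of V
   (perm_eq s (enum V)); x <_pi y iff index x s < index y s. *)
Definition perfect_elimination_ordering (A : V -> V -> R) (s : seq V) : Prop :=
  perm_eq s (enum V) /\
  forall x y z, (index x s < index y s)%N -> (index y s < index z s)%N ->
    Num.min (A x y) (A x z) <= A y z.

Definition has_peo (A : V -> V -> R) : Prop :=
  exists s : seq V, perfect_elimination_ordering A s.

(* W = [:: v_0; ...; v_p], p = (size W).-1 *)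
Definition weighted_chordless_walk (A : V -> V -> R) (W : seq V) : Prop :=
  forall (x0 : V) (i : nat), (0 < i)%N -> (i < (size W).-1)%N ->
    A (nth x0 W i.-1) (nth x0 W i.+1)
      < Num.min (A (nth x0 W i.-1) (nth x0 W i)) (A (nth x0 W i.+1) (nth x0 W i)).

Definition weighted_chordless_cycle (A : V -> V -> R) (W : seq V) : Prop :=
  let p := (size W).-1 in
  (3 <= p)%N /\ weighted_chordless_walk A W /\
  forall x0 : V,
    nth x0 W 0 = nth x0 W p /\ uniq (take p W) /\
    A (nth x0 W p.-1) (nth x0 W 1)
      < Num.min (A (nth x0 W p.-1) (nth x0 W 0)) (A (nth x0 W 0) (nth x0 W 1)).

Definition level_graph (A : V -> V -> R) (alpha : R) : rel V :=
  fun x y => (x != y) && (alpha <= A x y).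

Definition chordless_cycle (e : rel V) (c : seq V) : Prop :=
  let k := size c in
  (4 <= k)%N /\ uniq c /\
  forall (x0 : V) (i j : nat), (i < k)%N -> (j < k)%N -> i != j ->
    e (nth x0 c i) (nth x0 c j) = ((i.+1 %% k)%N == j) || ((j.+1 %% k)%N == i).

Definition chordal (e : rel V) : Prop := forall c : seq V, ~ chordless_cycle e c.

End Defs.

(* (i) => (ii): on a weighted chordless cycle, let x be the vertex that comes
   first in a perfect elimination ordering.  Its two cycle neighbours y, z come
   later, so the ordering gives A y z >= min (A x y) (A x z), which is exactly
   the chord that chordlessness at x forbids.
   (ii) => (iii): a chordless cycle of length >= 4 in the level graph for alpha
   is a weighted chordless cycle, because cyclically consecutive vertices carry
   entries >= alpha while vertices two apart are non-adjacent and so carry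
   entries < alpha.
   Both steps use that a weighted chordless cycle v_0 ... v_p = v_0 is the same
   thing as a duplicate-free cyclic sequence in which every three cyclically
   consecutive vertices form a chordless triple. *)

From mathcomp Require Import all_boot all_order all_algebra.
From mathcomp Require Import zify.
Import Order.TTheory GRing.Theory Num.Theory.
Set Implicit Arguments.
Unset Strict Implicit.
Unset Printing Implicit Defensive.

Local Open Scope ring_scope.

Section CyclicIndex.
Variables (T : eqType) (x0 : T) (c : seq T).
Local Notation k := (size c).
Local Notation cnth i := (nth x0 c (i %% k)).

Lemma mem_cnth i : (0 < k)%N -> cnth i \in c.
Proof. by move=> k_gt0; rewrite mem_nth ?ltn_pmod. Qed.

Lemma eq_cnthD i a b : uniq c -> (a < k)%N -> (b < k)%N ->
  (cnth (i + a) == cnth (i + b)) = (a == b).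
Proof.
move=> uc ak bk; have k_gt0 : (0 < k)%N by lia.
by rewrite nth_uniq ?ltn_pmod // eqn_modDl !modn_small.
Qed.

Lemma cnth_modD i a : cnth (i %% k + a) = cnth (i + a).
Proof. by rewrite modnDml. Qed.

Lemma nth_rcons_cnth y i : (0 < k)%N -> (i <= k)%N ->
  nth y (rcons c (nth x0 c 0)) i = cnth i.
Proof.
move=> k_gt0; rewrite leq_eqVlt nth_rcons => /orP[/eqP->|ik].
  by rewrite ltnn eqxx modnn.
by rewrite ik modn_small // (set_nth_default x0).
Qed.

End CyclicIndex.

Section Cycles.
Variables (R : realFieldType) (V : finType) (A : V -> V -> R) (x0 : V).
Hypothesis symA : symmetric_mx A.
Local Notation cnth c i := (nth x0 c (i %% size c)).

Lemma chordless_cycle_adj (e : rel V) c i a : chordless_cycle e c ->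
  (0 < a < size c)%N ->
  e (cnth c i) (cnth c (i + a)) = (a == 1%N) || (a == (size c).-1).
Proof.
move=> [k4 [uc adj]] /andP[a_gt0 ak]; have k_gt0 : (0 < size c)%N by lia.
have eq_modD0 n : (i + n == i %[mod size c]) = (n == 0 %[mod size c]).
  by rewrite -{2}[i]addn0 eqn_modDl.
rewrite adj ?ltn_pmod //; last by rewrite eq_sym eq_modD0 mod0n modn_small; lia.
rewrite -[((i %% size c).+1)%N]addn1 -[(((i + a) %% size c).+1)%N]addn1.
rewrite !modnDml -addnA.
rewrite eqn_modDl eq_modD0 mod0n (modn_small ak) modn_small; last lia.
rewrite [(1 == a)%N]eq_sym; congr (_ || _).
have [a1k|a1k] := eqVneq a.+1 (size c).
  by rewrite addn1 a1k modnn -a1k /= !eqxx.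
by rewrite addn1 modn_small; lia.
Qed.

Definition chordless_triple (x y z : V) : bool :=
  A x z < Num.min (A x y) (A z y).

Definition cyclically_chordless (c : seq V) : Prop :=
  forall i, chordless_triple (cnth c i) (cnth c (i + 1)) (cnth c (i + 2)).

Lemma weighted_chordless_cycle_rconsP c : uniq c -> (3 <= size c)%N ->
  weighted_chordless_cycle A (rcons c (nth x0 c 0)) <-> cyclically_chordless c.
Proof.
move=> uc k3; have k_gt0 : (0 < size c)%N by lia.
rewrite /weighted_chordless_cycle /weighted_chordless_walk size_rcons /=.
have nW y i : (i <= size c)%N -> nth y (rcons c (nth x0 c 0)) i = cnth c i.
  exact: nth_rcons_cnth.
have tri_last : chordless_triple (cnth c (size c).-1) (cnth c ((size c).-1 + 1))
    (cnth c ((size c).-1 + 2)) = (A (cnth c (size c).-1) (cnth c 1)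
    < Num.min (A (cnth c (size c).-1) (nth x0 c 0))
              (A (nth x0 c 0) (cnth c 1))).
  rewrite /chordless_triple addn1 addn2 prednK // -addn1 modnDl modnn.
  by rewrite (symA (cnth c 1)).
split.
- move=> [_ [walk cyc]] i.
  suff tri_lt j : (j < size c)%N ->
      chordless_triple (cnth c j) (cnth c (j + 1)) (cnth c (j + 2)).
    by have := tri_lt _ (ltn_pmod i k_gt0); rewrite !cnth_modD modn_mod.
  move=> jk; have [j1k|kj1] := ltnP j.+1 (size c).
    by have := walk x0 j.+1 isT j1k; rewrite !nW ?addn1 ?addn2 //; lia.
  have [_ [_ last]] := cyc x0; rewrite !nW ?leq_pred // mod0n in last.
  have -> : j = (size c).-1 by lia.
  by rewrite tri_last.
- move=> tri; split=> //; split.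
    move=> y [|i] // _ ik; have ik1 := ltnW ik; have ik2 := ltnW ik1.
    rewrite !nW //=.
    by have := tri i; rewrite addn1 addn2.
  move=> y; rewrite !nW ?leq_pred // modnn mod0n; split=> //; split.
    by rewrite -cats1 take_size_cat.
  by rewrite -tri_last tri.
Qed.

Lemma weighted_chordless_cycle_rcons W : weighted_chordless_cycle A W ->
  exists2 c, W = rcons c (nth x0 c 0) & uniq c /\ (3 <= size c)%N.
Proof.
move=> [p3 [_ cyc]]; have [W0p [uc _]] := cyc x0.
have pW : ((size W).-1 < size W)%N by case: (W) p3.
exists (take (size W).-1 W); last by rewrite size_takel ?(ltnW pW).
rewrite nth_take ?W0p; last exact: ltnW (ltnW p3).
by rewrite -(take_nth x0 pW) prednK ?take_size //; case: (W) p3.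
Qed.

Lemma peo_mem s v : perfect_elimination_ordering A s -> v \in s.
Proof. by move=> [sV _]; rewrite (perm_mem sV) mem_enum. Qed.

Lemma peo_simplicial s x y z : perfect_elimination_ordering A s ->
  (index x s < index y s)%N -> (index x s < index z s)%N -> y != z ->
  Num.min (A y x) (A z x) <= A y z.
Proof.
move=> peo_s xy xz yz; have [_ peo] := peo_s; rewrite (symA y) (symA z).
have [y_z|z_y|e] := ltngtP (index y s) (index z s).
- exact: peo.
- by rewrite minC (symA y); apply: peo.
- by rewrite (index_inj y (peo_mem y peo_s) (peo_mem z peo_s) e) eqxx in yz.
Qed.

Lemma peo_not_cyclically_chordless s c : perfect_elimination_ordering A s ->
  uniq c -> (3 <= size c)%N -> ~ cyclically_chordless c.
Proof.
move=> peo uc k3 tri; have k_gt0 : (0 < size c)%N := ltnW (ltnW k3).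
have [x xc xmin] :=
  @arg_minnP _ _ (fun v => v \in c) (index^~ s) (mem_nth x0 k_gt0).
pose j := index x c + (size c).-1.
have xj : cnth c (j + 1) = x.
  by rewrite -addnA addn1 prednK // modnDr modn_small ?index_mem // nth_index.
have after_x v : v \in c -> v != x -> (index x s < index v s)%N.
  move=> vc vx; rewrite ltn_neqAle xmin // andbT.
  apply: contra vx => /eqP/(index_inj x (peo_mem x peo) (peo_mem v peo)) ->.
  exact: eqxx.
have neq a b : (a < 3)%N -> (b < 3)%N -> a != b ->
    cnth c (j + a) != cnth c (j + b).
  by move=> a3 b3 ab; rewrite eq_cnthD ?(leq_trans a3 k3) ?(leq_trans b3 k3).
have := tri j; rewrite /chordless_triple xj ltNge => /negP; apply.
have := neq 0%N 1%N isT isT isT; have := neq 2%N 1%N isT isT isT.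
have := neq 0%N 2%N isT isT isT; rewrite addn0 xj => yz zx yx.
apply: peo_simplicial peo (after_x _ _ yx) (after_x _ _ zx) yz;
  exact: mem_cnth.
Qed.

Lemma level_chordless_cycle_cyclically_chordless alpha c :
  chordless_cycle (level_graph A alpha) c -> cyclically_chordless c.
Proof.
move=> cc i; have [k4 [uc _]] := cc.
have edge j : alpha <= A (cnth c j) (cnth c (j + 1)).
  have a1 : (0 < 1 < size c)%N by lia.
  by have := chordless_cycle_adj j cc a1; rewrite eqxx => /andP[].
have nonedge : A (cnth c i) (cnth c (i + 2)) < alpha.
  have a2 : (0 < 2 < size c)%N by lia.
  have := chordless_cycle_adj i cc a2.
  have k2 : (2 == (size c).-1) = false by lia.
  rewrite /level_graph -{1}[i]addn0 eq_cnthD ?k2 //=; try lia.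
  by rewrite ltNge => /negbT.
rewrite /chordless_triple lt_min (lt_le_trans nonedge (edge i)).
rewrite (symA (cnth c (i + 2))).
by rewrite (lt_le_trans nonedge) // -[2%N]/(1 + 1)%N addnA edge.
Qed.

End Cycles.

Theorem lemma4 (R : realFieldType) (V : finType) (A : V -> V -> R) :
  symmetric_mx A ->
  (has_peo A -> forall W : seq V, ~ weighted_chordless_cycle A W) /\
  ((forall W : seq V, ~ weighted_chordless_cycle A W) ->
     forall alpha : R, (exists x y, A x y = alpha) -> chordal (level_graph A alpha)).
Proof.
move=> symA; split.
  move=> [s peo] W wcc.
  have [x0 _] : exists x0 : V, x0 \in W.
    by case: W wcc => [[]|x0 W] //; exists x0; rewrite mem_head.
  have [c eW [uc k3]] := weighted_chordless_cycle_rcons x0 wcc.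
  move: wcc; rewrite eW => /(weighted_chordless_cycle_rconsP x0 symA uc k3).
  exact: peo_not_cyclically_chordless peo uc k3.
move=> no_wcc alpha _ c cc; have [k4 [uc _]] := cc.
have [x0 _] : exists x0 : V, x0 \in c.
  by case: c k4 {cc uc} => // x0 c; exists x0; rewrite mem_head.
apply: (no_wcc (rcons c (nth x0 c 0))).
apply/(weighted_chordless_cycle_rconsP x0 symA uc (ltnW k4)).
exact: level_chordless_cycle_cyclically_chordless cc.
Qed.
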